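(* Let $w(A,B)\in\mathbb F_2=\langle A,B\rangle$ and $m=(m_1)$ with $m_1\in\mathbb Z$. The representation $\Theta_2^{w,m}\colon FVB_2\to\mathrm{Aut}(\mathbb F_4)$ is not faithful if and only if $$w(A,B)=A^{k_1}B^{k_2}\cdots A^{k_r}B^{-k_r}\cdots A^{-k_2}B^{-k_1}A^{m_1}$$ for some integers $k_1,\dots,k_r$ (letters alternating between $A$ and $B$), all nonzero except possibly $k_1$ and $k_r$. In this case $\operatorname{Ker}(\Theta_2^{w,m})=X_2\cong\mathbb Z$, where $X_2=FVP_2\cap FVK_2$ is generated by $(\rho_1\sigma_1)^2$. For all other words $w$ the representation $\Theta_2^{w,m}$ is faithful.
   Context: $FVB_2$ is the group with generators $\sigma_1,\rho_1$ and defining relations $\sigma_1^2=\rho_1^2=1$. $\mathbb F_4$ is the free group on $x_1,x_2,y_1,y_2$; automorphisms compose left to right, $(\varphi\psi)(f)=\psi(\varphi(f))$; generators not mentioned are fixed. $\Theta_2^{w,m}\colon FVB_2\to\mathrm{Aut}(\mathbb F_4)$ is the homomorphism given by $\Theta_2^{w,m}(\sigma_1): x_1\mapsto x_2\,w(y_1,y_2),\ x_2\mapsto x_1\,w(y_1,y_2)^{-1}$ and $\Theta_2^{w,m}(\rho_1): x_1\mapsto x_2y_2^{m_1},\ x_2\mapsto x_1y_1^{-m_1},\ y_1\mapsto y_2,\ y_2\mapsto y_1$. Let $S_2=\langle\sigma_1\rangle$, $S_2'=\langle\rho_1\rangle$; $\pi_2\colon FVB_2\to S_2$ with $\pi_2(\sigma_1)=\pi_2(\rho_1)=\sigma_1$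 and $FVP_2=\operatorname{Ker}\pi_2$; $\nu_2\colon FVB_2\to S_2'$ with $\nu_2(\sigma_1)=1$, $\nu_2(\rho_1)=\rho_1$ and $FVK_2=\operatorname{Ker}\nu_2$. *)

(* Free groups are modelled by words over an alphabet of
   signed letters; two words denote the same group element iff their free
   reductions coincide. *)
From mathcomp Require Import all_boot ssralg ssrint.
Set Implicit Arguments. Unset Strict Implicit. Unset Printing Implicit Defensive.
Import GRing.Theory.

(* a letter (a, e): generator a, with exponent -1 iff e = true *)
Definition word (T : eqType) := seq (T * bool).

Definition inv_letter (T : eqType) (l : T * bool) : T * bool := (l.1, ~~ l.2).

Fixpoint freduce (T : eqType) (w : word T) : word T :=
  match w with
  | [::] => [::]
  | l :: w' =>
      match freduce w' with
      | l' :: r => if l' == inv_letter l then r else l :: l' :: r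
      | [::] => [:: l]
      end
  end.

Definition feq (T : eqType) (u v : word T) := freduce u = freduce v.

Definition finv (T : eqType) (w : word T) : word T := rev (map (@inv_letter T) w).

Definition gpow (T : eqType) (a : T) (k : int) : word T :=
  match k with
  | Posz n => nseq n (a, false)
  | Negz n => nseq n.+1 (a, true)
  end.

Definition fsubst (T U : eqType) (phi : T -> word U) (w : word T) : word U :=
  flatten (map (fun l => if l.2 then finv (phi l.1) else phi l.1) w).

Definition gA : 'I_2 := @Ordinal 2 0 isT.
Definition gB : 'I_2 := @Ordinal 2 1 isT.
Definition x1 : 'I_4 := @Ordinal 4 0 isT.
Definition x2 : 'I_4 := @Ordinal 4 1 isT.
Definition y1 : 'I_4 := @Ordinal 4 2 isT.
Definition y2 : 'I_4 := @Ordinal 4 3 isT.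

Definition wy (w : word 'I_2) : word 'I_4 :=
  fsubst (fun a : 'I_2 => [:: (if a == gA then y1 else y2, false)]) w.

Definition theta_sigma (w : word 'I_2) (x : 'I_4) : word 'I_4 :=
  if x == x1 then (x2, false) :: wy w
  else if x == x2 then (x1, false) :: finv (wy w)
  else [:: (x, false)].

Definition theta_rho (m1 : int) (x : 'I_4) : word 'I_4 :=
  if x == x1 then (x2, false) :: gpow y2 m1
  else if x == x2 then (x1, false) :: gpow y1 (- m1)
  else if x == y1 then [:: (y2, false)]
  else [:: (y1, false)].

(* ---------- FVB_2 = < sigma_1, rho_1 | sigma_1^2 = rho_1^2 = 1 > ----------
   Elements are words g : seq bool, true = sigma_1, false = rho_1 (both are
   involutions, so no inverse letters are needed). *)
Fixpoint breduce (g : seq bool) : seq bool :=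
  match g with
  | [::] => [::]
  | s :: g' =>
      match breduce g' with
      | s' :: r => if s' == s then r else s :: s' :: r
      | [::] => [:: s]
      end
  end.

Definition beq (g h : seq bool) := breduce g = breduce h.

(* g ^ n in FVB_2, n : int (inverse of a word = its reverse) *)
Definition bpow (g : seq bool) (n : int) : seq bool :=
  match n with
  | Posz k => flatten (nseq k g)
  | Negz k => flatten (nseq k.+1 (rev g))
  end.

Definition rho_sigma : seq bool := [:: false; true].

(* pi_2 : FVB_2 -> S_2 (value true = sigma_1), nu_2 : FVB_2 -> S_2'
   (value true = rho_1); both well defined on FVB_2. *)
Definition pi2 (g : seq bool) : bool := odd (size g).
Definition nu2 (g : seq bool) : bool := odd (count negb g).
Definition in_FVP2 (g : seq bool) : Prop := pi2 g = false.
Definition in_FVK2 (g : seq bool) : Prop := nu2 g = false.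
Definition in_X2 (g : seq bool) : Prop := in_FVP2 g /\ in_FVK2 g.

(* Theta_2^{w,m}(g) applied to f in F_4; automorphisms compose left to right:
   Theta(s_1 ... s_k)(f) = Theta(s_k)( ... Theta(s_1)(f)). *)
Definition theta_letter (w : word 'I_2) (m1 : int) (s : bool) :=
  if s then theta_sigma w else theta_rho m1.

Definition theta_act (w : word 'I_2) (m1 : int) (g : seq bool)
  (f : word 'I_4) : word 'I_4 :=
  foldl (fun f s => fsubst (theta_letter w m1 s) f) f g.

Definition in_ker_theta (w : word 'I_2) (m1 : int) (g : seq bool) : Prop :=
  forall f : word 'I_4, feq (theta_act w m1 g f) f.

Definition theta_faithful (w : word 'I_2) (m1 : int) : Prop :=
  forall g : seq bool, in_ker_theta w m1 g -> beq g [::].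

Fixpoint alt_word (T : eqType) (a b : T) (ks : seq int) : word T :=
  match ks with
  | [::] => [::]
  | k :: ks' => gpow a k ++ alt_word b a ks'
  end.

Definition special_word (ks : seq int) (m1 : int) : word 'I_2 :=
  alt_word gA gB ks ++ finv (alt_word gB gA ks) ++ gpow gA m1.

(* Write u = w(y1, y2), A = y1^m, B = y2^m and let sw4 swap y1
   and y2. The element (rho_1 sigma_1)^2 fixes y1, y2 and sends x2 to
   x2 (u A^{-1} sw4(u) B^{-1}); so it lies in the kernel iff this "defect"
   is trivial, i.e. iff the swap relation sw4(u) = A u^{-1} B holds.
   Conversely, Theta(g) permutes {x1, x2} and {y1, y2} according to the two
   parities of g, so every kernel element lies in X_2 = FVP_2 ∩ FVK_2, whose
   elements are the powers (rho_1 sigma_1)^{2k}; as free groups are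
   torsion-free, a nontrivial one in the kernel again forces the defect to be
   trivial. Finally, in F_2 the swap relation sw2(w) = A^m w^{-1} B^m says
   that v = w A^{-m} satisfies sw2(v) = v^{-1}, i.e. reduced v = P sw2(P)^{-1},
   which after writing P = A^{k_1} B^{k_2} ... is the form in the theorem. *)

From mathcomp Require Import all_boot ssralg ssrint zify.
(* imported last so that [finv] denotes the free-group inverse of Defs, not
   the function inverse of fingraph *)
From Pilot Require Import Defs.
Set Implicit Arguments. Unset Strict Implicit. Unset Printing Implicit Defensive.

Section FreeReduction.
Variable T : eqType.
Implicit Types (u v w x r : word T) (l : T * bool).

Definition fcons l (x : word T) : word T :=
  match x with
  | l' :: r => if l' == inv_letter l then r else l :: l' :: r
  | [::] => [:: l]
  end.

Lemma freduce_cons l w : freduce (l :: w) = fcons l (freduce w).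
Proof. by []. Qed.

Definition no_cancel l l' := l' != inv_letter l.
Definition reduced w := sorted no_cancel w.

Lemma inv_letterK l : inv_letter (inv_letter l) = l.
Proof. by case: l => a []. Qed.

Lemma inv_letter_neq l : (inv_letter l == l) = false.
Proof. by case: l => a b; rewrite /inv_letter /= xpair_eqE eqxx; case: b. Qed.

Lemma reduced_fcons l x : reduced x -> reduced (fcons l x).
Proof.
case: x => [|l' r] //= Hr; case: ifP => H.
  by case: r Hr => //= a r /andP [].
by rewrite /reduced /= /no_cancel H.
Qed.

Lemma reduced_freduce w : reduced (freduce w).
Proof. by elim: w => //= l w IH; apply: reduced_fcons. Qed.

Lemma freduce_id w : reduced w -> freduce w = w.
Proof.
elim: w => // l w IH Hw; rewrite freduce_cons IH; last exact: path_sorted Hw.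
by case: w Hw {IH} => //= l' w /andP [/negbTE ->].
Qed.

Lemma freduceK w : freduce (freduce w) = freduce w.
Proof. exact/freduce_id/reduced_freduce. Qed.

Lemma fcons_inv l x : reduced x -> fcons l (fcons (inv_letter l) x) = x.
Proof.
case: x => [|l' r] /=; first by rewrite eqxx.
rewrite inv_letterK; case: (eqVneq l' l) => [-> | Hne] Hr /=; last by rewrite eqxx.
by case: r Hr => //= l'' r /andP [/negbTE ->].
Qed.

Lemma freduce_fcons_cat l r v : freduce (fcons l r ++ v) = fcons l (freduce (r ++ v)).
Proof.
case: r => [|l' r] //=; case: ifP => // /eqP ->.
by rewrite fcons_inv // reduced_freduce.
Qed.

Lemma freduce_cat u v : freduce (u ++ v) = freduce (freduce u ++ freduce v).
Proof.
have catl : forall u, freduce (u ++ v) = freduce (freduce u ++ v).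
  by elim=> //= l u' IH; rewrite IH freduce_fcons_cat.
have catr : forall u, freduce (u ++ v) = freduce (u ++ freduce v).
  by elim=> [|l u' IH] /=; [rewrite freduceK | rewrite IH].
by rewrite catl catr.
Qed.

Lemma feq_sym u v : feq u v -> feq v u. Proof. by []. Qed.
Lemma feq_trans u v x : feq u v -> feq v x -> feq u x. Proof. by rewrite /feq => ->. Qed.

Lemma feq_freduce u : feq u (freduce u).
Proof. by rewrite /feq freduceK. Qed.

Lemma feq_cat u u' v v' : feq u u' -> feq v v' -> feq (u ++ v) (u' ++ v').
Proof. by rewrite /feq freduce_cat => -> ->; rewrite -freduce_cat. Qed.

Lemma feq_catl u v v' : feq v v' -> feq (u ++ v) (u ++ v').
Proof. exact: feq_cat. Qed.

Lemma feq_catr u u' v : feq u u' -> feq (u ++ v) (u' ++ v).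
Proof. by move=> H; apply: feq_cat. Qed.

Lemma feq_cons l u v : feq u v -> feq (l :: u) (l :: v).
Proof. exact: (@feq_catl [:: l]). Qed.

Lemma feq_mid u x y v : feq x y -> feq (u ++ x ++ v) (u ++ y ++ v).
Proof. by move=> H; apply/feq_catl/feq_catr. Qed.

Lemma feq_cancel_letter l u : feq (l :: inv_letter l :: u) u.
Proof. by rewrite /feq !freduce_cons fcons_inv // reduced_freduce. Qed.

Lemma feq_cancel_letter' l u : feq (inv_letter l :: l :: u) u.
Proof. by have := feq_cancel_letter (inv_letter l) u; rewrite inv_letterK. Qed.

Lemma finv_cat u v : finv (u ++ v) = finv v ++ finv u.
Proof. by rewrite /finv map_cat rev_cat. Qed.

Lemma finvK u : finv (finv u) = u.
Proof. by rewrite /finv map_rev revK -map_comp map_id_in // => l _ /=; rewrite inv_letterK. Qed.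

Lemma finv_cons l u : finv (l :: u) = finv u ++ [:: inv_letter l].
Proof. by rewrite /finv /= rev_cons cats1. Qed.

Lemma feq_mulV u : feq (u ++ finv u) [::].
Proof.
elim: u => //= l u IH; rewrite finv_cons catA /feq freduce_cons freduce_cat IH.
by rewrite /= eqxx.
Qed.

Lemma feq_mulVr u : feq (finv u ++ u) [::].
Proof. by have := feq_mulV (finv u); rewrite finvK. Qed.

Lemma feq_cancel_l u v : feq (u ++ finv u ++ v) v.
Proof. by rewrite catA; apply: (feq_trans (feq_catr v (feq_mulV u))). Qed.

Lemma feq_cancel_l' u v : feq (finv u ++ u ++ v) v.
Proof. by rewrite catA; apply: (feq_trans (feq_catr v (feq_mulVr u))). Qed.

Lemma feq_cancel_r u v : feq (u ++ v ++ finv v) u.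
Proof. by rewrite -{2}(cats0 u); apply/feq_catl/feq_mulV. Qed.

Lemma feq_cancel_r' u v : feq (u ++ finv v ++ v) u.
Proof. by rewrite -{2}(cats0 u); apply/feq_catl/feq_mulVr. Qed.

Lemma feq_finv u v : feq u v -> feq (finv u) (finv v).
Proof.
move=> H; apply: (@feq_trans _ (finv u ++ v ++ finv v)).
  exact/feq_sym/feq_cancel_r.
by apply: (feq_trans (feq_mid _ _ (feq_sym H))); apply: feq_cancel_l'.
Qed.

Lemma feq_solve_mid p x q : feq (p ++ x ++ q) [::] -> feq x (finv p ++ finv q).
Proof.
move=> H; apply: (@feq_trans _ (finv p ++ (p ++ x ++ q) ++ finv q)).
  rewrite -!catA; apply/feq_sym/(feq_trans (feq_cancel_l' p _)); exact: feq_cancel_r.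
exact: (feq_trans (feq_mid _ _ H)).
Qed.

Lemma reduced_finv r : reduced r -> reduced (finv r).
Proof.
rewrite /reduced /finv rev_sorted sorted_map; apply: sub_sorted => a b.
by rewrite /relpre /no_cancel /= inv_letterK eq_sym.
Qed.

Lemma freduce_finv v : freduce (finv v) = finv (freduce v).
Proof.
rewrite (feq_finv (feq_freduce v)) freduce_id //.
exact/reduced_finv/reduced_freduce.
Qed.

Lemma feq_nil_rotate x y : feq (x ++ y) [::] -> feq (y ++ x) [::].
Proof.
move=> H; apply: (feq_trans _ (feq_mulVr x)).
apply: (@feq_trans _ (finv x ++ (x ++ y) ++ x)); last exact: (feq_mid _ _ H).
by rewrite -catA; apply/feq_sym/feq_cancel_l'.
Qed.

Lemma feq_relator u su p q : feq su (p ++ finv u ++ q) <-> feq (u ++ finv p ++ su ++ finv q) [::].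
Proof.
split=> H.
  apply: (feq_trans (feq_catl u (feq_catl (finv p) (feq_catr (finv q) H)))).
  rewrite -!catA; apply: (feq_trans (feq_catl _ (feq_cancel_l' _ _))).
  exact: (feq_trans (feq_cancel_l _ _) (feq_mulV _)).
rewrite catA in H; move/feq_solve_mid: H; rewrite finv_cat !finvK -catA; exact.
Qed.

End FreeReduction.

Section Substitution.
Variables T U : eqType.
Implicit Types (u v w : word T) (l : T * bool) (phi psi : T -> word U).

Definition img phi l := if l.2 then finv (phi l.1) else phi l.1.

Lemma fsubst_cons phi l w : fsubst phi (l :: w) = img phi l ++ fsubst phi w.
Proof. by []. Qed.

Lemma fsubst_cat phi u v : fsubst phi (u ++ v) = fsubst phi u ++ fsubst phi v.
Proof. by rewrite /fsubst map_cat flatten_cat. Qed.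

Lemma img_inv phi l : img phi (inv_letter l) = finv (img phi l).
Proof. by case: l => a [] /=; rewrite /img /= ?finvK. Qed.

Lemma fsubst_finv phi u : fsubst phi (finv u) = finv (fsubst phi u).
Proof.
elim: u => [|l u IH] //; rewrite finv_cons fsubst_cat IH fsubst_cons finv_cat.
by rewrite /fsubst /= cats0 -/(img phi (inv_letter l)) img_inv.
Qed.

Lemma fsubst_freduce phi w : feq (fsubst phi w) (fsubst phi (freduce w)).
Proof.
elim: w => // l w IH; rewrite freduce_cons fsubst_cons.
apply: (feq_trans (feq_catl _ IH)); case: (freduce w) => [|l' r] //=.
case: ifP => // /eqP ->; rewrite fsubst_cons img_inv.
exact: feq_cancel_l.
Qed.

Lemma feq_fsubst phi u v : feq u v -> feq (fsubst phi u) (fsubst phi v).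
Proof.
move=> H; apply: (feq_trans (fsubst_freduce phi u)); rewrite H.
exact/feq_sym/fsubst_freduce.
Qed.

Lemma eq_fsubst phi psi w : phi =1 psi -> fsubst phi w = fsubst psi w.
Proof. by move=> H; elim: w => // l w IH; rewrite !fsubst_cons IH /img H. Qed.

Lemma feq_fsubst_pw phi psi w :
  (forall a, feq (phi a) (psi a)) -> feq (fsubst phi w) (fsubst psi w).
Proof.
move=> H; elim: w => // l w IH; rewrite !fsubst_cons.
by apply: feq_cat => //; rewrite /img; case: l.2; [apply: feq_finv |].
Qed.

End Substitution.

Lemma fsubst_id (T : eqType) (w : word T) : fsubst (fun a => [:: (a, false)]) w = w.
Proof. by elim: w => // [[a b]] w IH; rewrite fsubst_cons IH; case: b. Qed.

Lemma fsubst_comp (T U V : eqType) (phi : U -> word V) (psi : T -> word U) w :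
  fsubst phi (fsubst psi w) = fsubst (fun a => fsubst phi (psi a)) w.
Proof.
elim: w => // l w IH; rewrite fsubst_cons fsubst_cat IH fsubst_cons; congr (_ ++ _).
by rewrite /img; case: l.2; rewrite ?fsubst_finv.
Qed.

(* Renaming the generators along a map [f]; it reflects [feq] when [f] is
   injective, since it then commutes with free reduction. *)
Section Renaming.
Variables T U : eqType.
Implicit Types (u v w : word T).

Definition rename (f : T -> U) (w : word T) : word U := map (fun l => (f l.1, l.2)) w.

Lemma fsubst_rename f w : fsubst (fun a => [:: (f a, false)]) w = rename f w.
Proof. by elim: w => // [[a b]] w IH; rewrite fsubst_cons IH; case: b. Qed.

Lemma rename_cat f u v : rename f (u ++ v) = rename f u ++ rename f v.
Proof. exact: map_cat. Qed.

Lemma rename_finv f w : rename f (finv w) = finv (rename f w).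
Proof. by rewrite /rename /finv map_rev -!map_comp. Qed.

Lemma rename_gpow f a k : rename f (gpow a k) = gpow (f a) k.
Proof. by case: k => n; rewrite /rename /= map_nseq. Qed.

Lemma feq_rename f u v : feq u v -> feq (rename f u) (rename f v).
Proof. by rewrite -!fsubst_rename; apply: feq_fsubst. Qed.

Lemma freduce_rename f w : injective f -> freduce (rename f w) = rename f (freduce w).
Proof.
move=> Hf; elim: w => // l w IH.
rewrite /rename map_cons -/(rename f w) freduce_cons IH freduce_cons.
case: (freduce w) => [|l' r] //=.
have -> : ((f l'.1, l'.2) == inv_letter (f l.1, l.2)) = (l' == inv_letter l).
  by case: l' l => a b [c d]; rewrite /inv_letter /= !xpair_eqE inj_eq.
by case: ifP.
Qed.

Lemma feq_rename_inj f u v : injective f -> feq (rename f u) (rename f v) -> feq u v.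
Proof.
move=> Hf; rewrite /feq !freduce_rename // => /inj_map; apply.
by move=> [a b] [c d] /= [/Hf -> ->].
Qed.

End Renaming.

Lemma rename_comp (T U V : eqType) (f : U -> V) (g : T -> U) w :
  rename f (rename g w) = rename (f \o g) w.
Proof. by rewrite /rename -map_comp. Qed.

(* A reduced word is either cyclically reduced, and then its powers are
   reduced, or a conjugate [l r l^-1] of a shorter reduced word [r]. *)
Section TorsionFree.
Variable T : eqType.
Implicit Types (x r : word T) (l : T * bool).

Definition pow x k := flatten (nseq k x).

Lemma powS x k : pow x k.+1 = x ++ pow x k. Proof. by []. Qed.

Lemma powSr x k : pow x k.+1 = pow x k ++ x.
Proof. by elim: k => [|k IH]; [rewrite /pow /= cats0 | rewrite powS {1}IH catA]. Qed.

Lemma feq_pow x y k : feq x y -> feq (pow x k) (pow y k).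
Proof. by move=> H; elim: k => // k IH; apply: feq_cat. Qed.

Lemma reduced_pow_cyclic l r k :
  reduced (l :: r) -> no_cancel (last l r) l -> reduced (pow (l :: r) k).
Proof.
move=> Hr Hc; elim: k => // k IH.
rewrite /pow /= -/(pow (l :: r) k) /reduced /= cat_path; apply/andP; split; first exact: Hr.
by case: k IH => // k; rewrite /pow /= -/(pow (l :: r) k) /reduced /= => ->; rewrite Hc.
Qed.

Lemma pow_conj l mid k : 0 < k ->
  feq (pow (l :: rcons mid (inv_letter l)) k) (l :: pow mid k ++ [:: inv_letter l]).
Proof.
case: k => // k _; elim: k => [|k IH]; first by rewrite /pow /= !cats0 cats1.
rewrite powS (powS mid); apply: (feq_trans (feq_catl _ IH)); rewrite cat_cons; apply: feq_cons.
by rewrite -cats1 -!catA; apply/feq_catl/feq_cancel_letter'.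
Qed.

Lemma torsion_reduced r k : reduced r -> r != [::] -> 0 < k -> freduce (pow r k) != [::].
Proof.
move=> + + Hk; have [n] := ubnP (size r); elim: n r => // n IH [//|l r'] /ltnSE Hsz Hr _.
have [Hc|] := boolP (no_cancel (last l r') l).
  by rewrite freduce_id ?reduced_pow_cyclic // -(prednK Hk).
rewrite /no_cancel negbK; case/lastP: r' Hr Hsz => [|mid l'] Hr Hsz.
  by rewrite /= eq_sym inv_letter_neq.
rewrite last_rcons => /eqP El'; have {}El' : l' = inv_letter l by rewrite El' inv_letterK.
subst l'.
case: mid Hr Hsz => [|y mid] Hr Hsz; first by move: Hr; rewrite /reduced /= /no_cancel eqxx.
have Hmid : reduced (y :: mid) by move/path_sorted: Hr; rewrite /= rcons_path => /andP [].
have /IH /(_ Hmid isT) : size (y :: mid) < n by move: Hsz; rewrite /= size_rcons; lia.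
apply: contra => /eqP H0; apply/eqP.
(* the power of [y :: mid] is the conjugate of the power of [l :: ...] *)
set P := pow (y :: mid) k.
have HP : feq ([:: inv_letter l] ++ (l :: P ++ [:: inv_letter l]) ++ [:: l]) P.
  rewrite /= -catA /=; apply: (feq_trans (feq_cancel_letter' _ _)).
  by rewrite -{2}(cats0 P); apply/feq_catl/feq_cancel_letter'.
rewrite -HP freduce_cat (freduce_cat (l :: _)) -(pow_conj _ _ Hk) H0 /=.
by rewrite inv_letterK eqxx.
Qed.

Lemma free_torsionfree x k : 0 < k -> feq (pow x k) [::] -> feq x [::].
Proof.
move=> Hk H; rewrite /feq /=; apply/eqP; apply: contraT => Hne.
by have := torsion_reduced (reduced_freduce x) Hne Hk; rewrite -(feq_pow k (feq_freduce x)) H.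
Qed.

End TorsionFree.

Local Open Scope ring_scope.

Lemma gpow_opp (T : eqType) (a : T) k : gpow a (- k) = finv (gpow a k).
Proof.
by case: k => [[|n]|n] //; rewrite ?NegzE ?opprK /finv /gpow map_nseq rev_nseq.
Qed.

Definition sgn (e : bool) : int := if e then -1 else 1.

Lemma sgn_neq0 e : sgn e != 0. Proof. by case: e. Qed.

Lemma gpow_sgn (T : eqType) (a : T) e : gpow a (sgn e) = [:: (a, e)].
Proof. by case: e. Qed.

Lemma feq_cons_gpow (T : eqType) (a : T) e k X :
  feq ((a, e) :: gpow a k ++ X) (gpow a (k + sgn e) ++ X).
Proof.
rewrite -cat_cons; apply: feq_catr.
case: e; case: k => [[|n]|n]; rewrite /sgn //.
- have -> : n.+1%:Z + -1 = n%:Z by lia.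
  exact: (feq_cancel_letter' (a, false)).
- by have -> : Negz n + -1 = Negz n.+1 by rewrite !NegzE; lia.
- by have -> : n.+1%:Z + 1 = n.+2%:Z by lia.
case: n => [|n].
  have -> : Negz 0 + 1 = 0 by rewrite !NegzE; lia.
  exact: (feq_cancel_letter (a, false) [::]).
have -> : Negz n.+1 + 1 = Negz n by rewrite !NegzE; lia.
exact: (feq_cancel_letter (a, false)).
Qed.

Local Close Scope ring_scope.

Lemma I2_cases (c : 'I_2) : c = gA \/ c = gB.
Proof. by case: c => [[|[|n]] Hn]; [left | right | ]; try apply: val_inj. Qed.

Definition sw2 (a : 'I_2) : 'I_2 := if a == gA then gB else gA.

Lemma alt_word_sw2 ks a b : sw2 a = b -> sw2 b = a ->
  rename sw2 (alt_word a b ks) = alt_word b a ks.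
Proof.
elim: ks a b => // k ks IH a b Ha Hb /=.
by rewrite rename_cat rename_gpow Ha IH.
Qed.

Lemma alt_word_decomp (P : word 'I_2) : exists ks : seq int,
  [/\ 0 < size ks, all (fun k => k != 0%R) (behead ks) & feq P (alt_word gA gB ks)].
Proof.
elim: P => [|[c e] P [[|k1 rest] [//= _ Hall H]]]; first by exists [:: 0%R].
have {}H : feq ((c, e) :: P) ((c, e) :: gpow gA k1 ++ alt_word gB gA rest).
  exact: feq_cons.
move: H; have [->|->] := I2_cases c => H.
  exists ((k1 + sgn e)%R :: rest); split => //.
  by apply: (feq_trans H); apply: feq_cons_gpow.
have [Ek1|Hk1] := eqVneq k1 0%R; last first.
  (* a leading B in front of a nontrivial A^{k1} *)
  exists (0%R :: sgn e :: k1 :: rest); split => //=; first by rewrite sgn_neq0 Hk1.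
  by rewrite gpow_sgn.
(* a leading B merges into B^{k2}, which may in turn vanish *)
rewrite {}Ek1 /= in H; case: rest Hall H => [|k2 rest2] Hall H.
  by exists [:: 0%R; sgn e]; split => //=; rewrite ?sgn_neq0 ?gpow_sgn.
move: Hall => /= /andP [_ Hall]; have {}H := feq_trans H (feq_cons_gpow _ _ _ _).
have [Ek2|Hk2] := eqVneq (k2 + sgn e)%R 0%R.
  rewrite Ek2 /= in H; case: rest2 Hall H => [|k3 rest3] Hall H; first by exists [:: 0%R].
  by exists (k3 :: rest3); split => //; case/andP: Hall.
by exists (0%R :: (k2 + sgn e)%R :: rest2); split => //=; rewrite Hk2.
Qed.

(* A word [r] with [s(r) = r^{-1}] letterwise (for any renaming [s]) has even
   length and is of the form [P s(P)^{-1}]: its middle letter would otherwise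
   equal its own inverse. *)
Lemma swap_palindrome (T : eqType) (s : T -> T) (r : word T) :
  rename s r = finv r -> r = take (size r)./2 r ++ finv (rename s (take (size r)./2 r)).
Proof.
move=> E; have Hsize := odd_double_half (size r).
have [Hodd|Heven] := boolP (odd (size r)).
  (* the exponent signs [bs] satisfy [bs = rev (map negb bs)], impossible at
     the middle position of an odd-length word *)
  have Ebs : map snd r = rev (map negb (map snd r)).
    by have := congr1 (map snd) E; rewrite /rename /finv -!map_comp map_rev -map_comp.
  move: Hsize; rewrite Hodd -addnn => Hsize.
  have := congr1 (nth true ^~ (size r)./2) Ebs.
  rewrite nth_rev !size_map; last lia.
  have -> : size r - ((size r)./2).+1 = (size r)./2 by lia.
  by rewrite (nth_map true) ?size_map; [case: nth | lia].
move: Hsize; rewrite (negbTE Heven) add0n -addnn => Hsize.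
have := congr1 (take (size r)./2) E.
rewrite /rename -map_take -/(rename s _) /finv take_rev size_map.
have -> : size r - (size r)./2 = (size r)./2 by lia.
by rewrite -map_drop -/(finv _) => ->; rewrite -/(finv _) finvK cat_take_drop.
Qed.

(* For [s] exchanging A and B in F_2 it characterizes the
   words of the theorem; in F_4 it is the kernel condition. *)
Definition swap_rel (T : eqType) (s : T -> T) (a b : T) (m : int) (w : word T) : Prop :=
  feq (rename s w) (gpow a m ++ finv w ++ gpow b m).

Lemma swap_rel_rename (T U : eqType) (f : T -> U) (s : T -> T) (s' : U -> U) a b m w :
  injective f -> (forall x, f (s x) = s' (f x)) ->
  swap_rel s a b m w <-> swap_rel s' (f a) (f b) m (rename f w).
Proof.
move=> Hf Hs; rewrite /swap_rel.
have -> : rename s' (rename f w) = rename f (rename s w).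
  by rewrite !rename_comp /rename; apply: eq_map => l /=; rewrite Hs.
rewrite -rename_finv -!rename_gpow -!rename_cat.
by split; [apply: feq_rename | apply: feq_rename_inj].
Qed.

Lemma special_word_swap ks m w : feq w (special_word ks m) -> swap_rel sw2 gA gB m w.
Proof.
move=> H; rewrite /swap_rel; set Q := alt_word gA gB ks.
apply: (feq_trans (feq_rename sw2 H)).
rewrite /special_word -/Q !rename_cat rename_finv rename_gpow.
rewrite (@alt_word_sw2 ks gB gA erefl erefl) (@alt_word_sw2 ks gA gB erefl erefl) -/Q.
apply/feq_sym/(feq_trans (feq_mid _ _ (feq_finv H))).
by rewrite /special_word -/Q !finv_cat finvK -!catA; apply: feq_cancel_l.
Qed.

(* conversely, [v = w A^{-m}] satisfies [sw2(v) = v^{-1}], so its reduced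
   form is [P sw2(P)^{-1}], and [P] is an alternating word *)
Lemma swap_special_word m w : swap_rel sw2 gA gB m w -> exists ks : seq int,
  [/\ 0 < size ks, all (fun k => k != 0%R) (behead ks) & feq w (special_word ks m)].
Proof.
move=> H; set v := w ++ finv (gpow gA m).
have Hv : feq (rename sw2 v) (finv v).
  rewrite /v rename_cat rename_finv rename_gpow finv_cat finvK.
  apply: (feq_trans (feq_catr _ H)).
  by rewrite -!catA catA; apply: feq_cancel_r.
set r := freduce v.
have Hr : rename sw2 r = finv r.
  have Hsw2 : injective sw2 by apply: (can_inj (g := sw2)) => a; case: (I2_cases a) => ->.
  by rewrite /r -freduce_rename // Hv freduce_finv.
move: (take _ r) (swap_palindrome Hr) => P Hsplit.
have [ks [Hs Hall HP]] := alt_word_decomp P; exists ks; split => //.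
have Hw : feq w (v ++ gpow gA m) by rewrite /v -catA; apply/feq_sym/feq_cancel_r'.
apply: (feq_trans Hw); rewrite /special_word catA; apply: feq_catr.
apply: (feq_trans (feq_freduce v)); rewrite -/r Hsplit.
apply: feq_cat => //; apply: feq_finv.
by rewrite -(@alt_word_sw2 ks gA gB erefl erefl); apply: feq_rename.
Qed.

(* FVB_2 is the free product Z/2 * Z/2: [breduce] yields the alternating
   normal form, on which the parities [pi2] and [nu2] can be read off. *)
Section FVB2NormalForm.
Implicit Types (g h x : seq bool) (s : bool).

Definition bcons s x : seq bool :=
  match x with
  | s' :: r => if s' == s then r else s :: s' :: r
  | [::] => [:: s]
  end.

Lemma breduce_cons s g : breduce (s :: g) = bcons s (breduce g). Proof. by []. Qed.

Definition alternating g := sorted (fun a b : bool => a != b) g.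

Lemma alternating_breduce g : alternating (breduce g).
Proof.
elim: g => // s g; rewrite breduce_cons.
case: (breduce g) => [|s' r] //= IH; case: ifP => H.
  by case: r IH => //= a r /andP [].
by rewrite /alternating /= eq_sym H.
Qed.

Lemma breduce_id h : alternating h -> breduce h = h.
Proof.
elim: h => // s h IH Hh; rewrite breduce_cons IH; last exact: path_sorted Hh.
by case: h Hh {IH} => //= s' h /andP [H _]; rewrite eq_sym (negbTE H).
Qed.

Lemma odd_size_bcons s x : odd (size (bcons s x)) = ~~ odd (size x).
Proof. by case: x => //= s' r; case: ifP => //=; rewrite negbK. Qed.

Lemma odd_count_bcons s x : odd (count negb (bcons s x)) = ~~ s (+) odd (count negb x).
Proof.
case: x => [|s' r] /=; first by case: s.
by case: ifP => [/eqP ->|_] /=; rewrite ?oddD; case: s; rewrite /= ?negbK.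
Qed.

Lemma pi2_breduce g : pi2 (breduce g) = pi2 g.
Proof. by elim: g => // s g IH; rewrite /pi2 breduce_cons odd_size_bcons -/(pi2 _) IH. Qed.

Lemma nu2_breduce g : nu2 (breduce g) = nu2 g.
Proof.
elim: g => // s g IH; rewrite /nu2 breduce_cons odd_count_bcons -/(nu2 _) IH /nu2 /=.
by rewrite oddD; case: s.
Qed.

Fixpoint altb (b : bool) (n : nat) : seq bool :=
  if n is n'.+1 then b :: altb (~~ b) n' else [::].

Lemma size_altb b n : size (altb b n) = n.
Proof. by elim: n b => //= n IH b; rewrite IH. Qed.

Lemma alternating_form h : alternating h -> h = altb (head true h) (size h).
Proof.
case: h => // b h; elim: h b => // c h IH b /= /andP [Hbc Hh].
have Ec : c = ~~ b by move: Hbc; case: (b); case: (c).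
by move: Hh; rewrite Ec => /IH {1}->.
Qed.

Lemma altb_double b n : altb b n.*2.+2 = b :: ~~ b :: altb b n.*2.
Proof. by rewrite /= negbK. Qed.

Lemma count_altb_double b n : count negb (altb b n.*2) = n.
Proof. by elim: n => // n IH; rewrite doubleS altb_double /= IH; case: (b). Qed.

(* [pow4 false k] is [(rho_1 sigma_1)^{2k}], [pow4 true k] is [(sigma_1 rho_1)^{2k}] *)
Definition pow4 (b : bool) (k : nat) : seq bool := flatten (nseq k (altb b 4)).

Lemma pow4S b k : pow4 b k.+1 = altb b 4 ++ pow4 b k. Proof. by []. Qed.

Lemma pow4_altb b k : pow4 b k = altb b (k.*2.*2).
Proof. by elim: k => // k IH; rewrite pow4S IH !doubleS /= !negbK. Qed.

Lemma alternating_altb b n : alternating (altb b n).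
Proof.
elim: n b => [|[|n] IH] b //; have := IH (~~ b).
by rewrite /alternating /= => ->; case: b.
Qed.

Lemma alternating_pow4 b k : alternating (pow4 b k).
Proof. by rewrite pow4_altb; apply: alternating_altb. Qed.

Lemma in_X2_pow4 b k : in_X2 (pow4 b k).
Proof.
by rewrite /in_X2 /in_FVP2 /in_FVK2 /pi2 /nu2 pow4_altb count_altb_double size_altb !odd_double.
Qed.

End FVB2NormalForm.

Lemma X2_normal_form g : in_X2 g -> exists b k, breduce g = pow4 b k.
Proof.
case=> Hp Hn; have Eh := alternating_form (alternating_breduce g).
move: Hp Hn; rewrite /in_FVP2 /in_FVK2 -pi2_breduce -nu2_breduce /pi2 /nu2 Eh size_altb.
move: (head _ _) (size _) => b n Hp; have En := odd_double_half n; rewrite Hp add0n in En.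
rewrite -{}En count_altb_double => Hn; have Ek := odd_double_half n./2.
rewrite Hn add0n in Ek.
by exists b, n./2./2; rewrite pow4_altb Ek.
Qed.

Local Open Scope ring_scope.

Lemma bpow_rho_sigma_pos (k : nat) : bpow rho_sigma (2 * k%:Z) = pow4 false k.
Proof.
have -> : 2 * k%:Z = (k.*2)%:Z by rewrite -addnn; lia.
by rewrite /bpow; elim: k => //= k ->.
Qed.

Lemma bpow_rho_sigma_neg (k : nat) : bpow rho_sigma (2 * Negz k) = pow4 true k.+1.
Proof.
have -> : 2 * Negz k = Negz (k.*2.+1) by rewrite !NegzE -addnn; lia.
by rewrite /bpow -[k.*2.+2]/(k.+1).*2; elim: k.+1 => //= j ->.
Qed.

Lemma bpow_rho_sigma_pow4 (n : int) :
  exists b k, bpow rho_sigma (2 * n) = pow4 b k /\ (k = 0%N -> n = 0).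
Proof.
case: n => k; first by exists false, k; rewrite bpow_rho_sigma_pos; split => // ->.
by exists true, k.+1; rewrite bpow_rho_sigma_neg.
Qed.

Lemma pow4_bpow_rho_sigma b k : exists n, bpow rho_sigma (2 * n) = pow4 b k.
Proof.
case: b k => [] [|k]; try by exists 0.
  by exists (Negz k); rewrite bpow_rho_sigma_neg.
by exists k.+1%:Z; rewrite bpow_rho_sigma_pos.
Qed.

Local Close Scope ring_scope.

Lemma X2_char g : in_X2 g <-> exists n : int, beq g (bpow rho_sigma (2 * n)%R).
Proof.
split=> [/X2_normal_form [b [k Eg]] |].
  have [n En] := pow4_bpow_rho_sigma b k.
  by exists n; rewrite /beq En Eg (breduce_id (alternating_pow4 b k)).
case=> n; have [b [k [-> _]]] := bpow_rho_sigma_pow4 n.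
rewrite /beq (breduce_id (alternating_pow4 b k)) => Eg.
have [Hp Hn] := in_X2_pow4 b k.
by split; [rewrite /in_FVP2 -pi2_breduce Eg | rewrite /in_FVK2 -nu2_breduce Eg].
Qed.

Lemma bpow_rho_sigma_nil (n : int) : beq (bpow rho_sigma (2 * n)%R) [::] -> n = 0%R.
Proof.
have [b [k [-> Hk]]] := bpow_rho_sigma_pow4 n.
rewrite /beq (breduce_id (alternating_pow4 b k)) => H; apply: Hk.
by move: (size_altb b k.*2.*2); rewrite -pow4_altb H /=; case: k {H}.
Qed.


(* The generators of F_4; [cy] embeds F_2 as <y1, y2> and [sw4] exchanges
   y1 and y2 (the action of rho_1 on <y1, y2>). *)
Lemma I4_cases (a : 'I_4) : [\/ a = x1, a = x2, a = y1 | a = y2].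
Proof.
case: a => [[|[|[|[|n]]]] Hn] //;
  [constructor 1 | constructor 2 | constructor 3 | constructor 4]; exact: val_inj.
Qed.

Definition cy (a : 'I_2) : 'I_4 := if a == gA then y1 else y2.
Definition sw4 (a : 'I_4) : 'I_4 := if a == y1 then y2 else if a == y2 then y1 else a.

Lemma sw4K a : sw4 (sw4 a) = a.
Proof. by case: (I4_cases a) => ->. Qed.

Lemma rename_sw4K v : rename sw4 (rename sw4 v) = v.
Proof. by rewrite rename_comp /rename map_id_in // => [[a e]] _ /=; rewrite sw4K. Qed.

Lemma wy_rename w : wy w = rename cy w.
Proof. exact: fsubst_rename. Qed.

Lemma swap_rel_wy w m : swap_rel sw2 gA gB m w <-> swap_rel sw4 y1 y2 m (wy w).
Proof.
rewrite wy_rename; apply: swap_rel_rename.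
  by move=> a b; case: (I2_cases a) => ->; case: (I2_cases b) => ->.
by move=> a; case: (I2_cases a) => ->.
Qed.

Definition yw (v : word 'I_4) := all (fun l => (l.1 == y1) || (l.1 == y2)) v.

Lemma yw_cat u v : yw (u ++ v) = yw u && yw v. Proof. exact: all_cat. Qed.
Lemma yw_finv u : yw (finv u) = yw u.
Proof. by rewrite /yw /finv all_rev all_map. Qed.
Lemma yw_sw4 u : yw (rename sw4 u) = yw u.
Proof. by rewrite /yw all_map; apply: eq_all => [[a b]] /=; case: (I4_cases a) => ->. Qed.
Lemma yw_gpow1 k : yw (gpow y1 k). Proof. by case: k => n; rewrite /yw all_nseq /= ?orbT. Qed.
Lemma yw_gpow2 k : yw (gpow y2 k). Proof. by case: k => n; rewrite /yw all_nseq /= ?orbT. Qed.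
Lemma yw_wy w : yw (wy w).
Proof. by rewrite wy_rename /yw all_map; apply/allP => [[a b]] _ /=; rewrite /cy; case: ifP. Qed.

Lemma yw_freduce u : yw u -> yw (freduce u).
Proof.
elim: u => // l u IH /= /andP [Hl /IH].
case: (freduce u) => [|l' r] /=; first by rewrite Hl.
by case: ifP => _ /=; [case/andP | rewrite Hl => ->].
Qed.

Lemma fsubst_fix_yw (phi : 'I_4 -> word 'I_4) Y :
  phi y1 = [:: (y1, false)] -> phi y2 = [:: (y2, false)] -> yw Y -> fsubst phi Y = Y.
Proof.
move=> H1 H2; elim: Y => // [[a b]] Y IH /= /andP [Ha HY]; rewrite fsubst_cons IH //.
by rewrite /img /=; case/orP: Ha => /eqP ->; rewrite ?H1 ?H2; case: b.
Qed.

Section ThetaHom.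
Variables (w : word 'I_2) (m : int).
Local Notation Th := (theta_act w m).

Lemma theta_cat g h f : Th (g ++ h) f = Th h (Th g f).
Proof. by rewrite /theta_act foldl_cat. Qed.

Lemma theta_rcons g s f : Th (rcons g s) f = fsubst (theta_letter w m s) (Th g f).
Proof. by rewrite /theta_act foldl_rcons. Qed.

Lemma theta_fsubst g f : Th g f = fsubst (fun a => Th g [:: (a, false)]) f.
Proof.
elim/last_ind: g f => [|g s IH] f; first by rewrite fsubst_id.
rewrite theta_rcons IH fsubst_comp; apply: eq_fsubst => a.
by rewrite theta_rcons IH /= /fsubst /= cats0.
Qed.

Lemma theta_feq g f f' : feq f f' -> feq (Th g f) (Th g f').
Proof. by rewrite !(theta_fsubst g); apply: feq_fsubst. Qed.

Lemma theta_cons_gen g a Y : Th g ((a, false) :: Y) = Th g [:: (a, false)] ++ Th g Y.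
Proof. by rewrite !(theta_fsubst g) fsubst_cons /= /fsubst /= cats0. Qed.

Lemma ker_gen g : (forall a, feq (Th g [:: (a, false)]) [:: (a, false)]) -> in_ker_theta w m g.
Proof. by move=> H f; rewrite theta_fsubst -{2}(fsubst_id f); apply: feq_fsubst_pw. Qed.

Lemma theta_sigma_yw Y : yw Y -> fsubst (theta_sigma w) Y = Y.
Proof. exact: fsubst_fix_yw. Qed.

Lemma theta_rho_yw Y : yw Y -> fsubst (theta_rho m) Y = rename sw4 Y.
Proof.
elim: Y => // [[a b]] Y IH /= /andP [Ha HY]; rewrite fsubst_cons IH //.
by case/orP: Ha => /eqP ->; case: b.
Qed.

Lemma theta_sigma_x1 Y : yw Y ->
  fsubst (theta_sigma w) ((x1, false) :: Y) = (x2, false) :: wy w ++ Y.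
Proof. by move=> H; rewrite fsubst_cons theta_sigma_yw. Qed.
Lemma theta_sigma_x2 Y : yw Y ->
  fsubst (theta_sigma w) ((x2, false) :: Y) = (x1, false) :: finv (wy w) ++ Y.
Proof. by move=> H; rewrite fsubst_cons theta_sigma_yw. Qed.
Lemma theta_rho_x1 Y : yw Y ->
  fsubst (theta_rho m) ((x1, false) :: Y) = (x2, false) :: gpow y2 m ++ rename sw4 Y.
Proof. by move=> H; rewrite fsubst_cons theta_rho_yw. Qed.
Lemma theta_rho_x2 Y : yw Y ->
  fsubst (theta_rho m) ((x2, false) :: Y) = (x1, false) :: gpow y1 (- m) ++ rename sw4 Y.
Proof. by move=> H; rewrite fsubst_cons theta_rho_yw. Qed.

Lemma theta_letter_invol s f :
  feq (fsubst (theta_letter w m s) (fsubst (theta_letter w m s) f)) f.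
Proof.
rewrite fsubst_comp -{2}(fsubst_id f); apply: feq_fsubst_pw => a.
case: (I4_cases a) => ->; case: s => //=.
- by rewrite theta_sigma_x2 ?yw_wy //; apply/feq_cons/feq_mulVr.
- rewrite theta_rho_x2 ?yw_gpow2 // rename_gpow gpow_opp.
  by apply/feq_cons/feq_mulVr.
- by rewrite theta_sigma_x1 ?yw_finv ?yw_wy //; apply/feq_cons/feq_mulV.
rewrite theta_rho_x1 ?yw_gpow1 // rename_gpow gpow_opp.
by apply/feq_cons/feq_mulV.
Qed.

Lemma theta_breduce g f : feq (Th g f) (Th (breduce g) f).
Proof.
elim: g f => // s g IH f; rewrite breduce_cons; apply: (feq_trans (IH _)).
case: (breduce g) => [|s' r] //=; case: ifP => // /eqP ->.
exact/theta_feq/theta_letter_invol.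
Qed.

Lemma ker_breduce g : in_ker_theta w m g -> in_ker_theta w m (breduce g).
Proof. by move=> H f; apply: feq_trans (H f); apply/feq_sym/theta_breduce. Qed.

End ThetaHom.

Section ThetaShape.
Variables (w : word 'I_2) (m : int).
Local Notation Th := (theta_act w m).

Definition xs (b : bool) : 'I_4 := if b then x2 else x1.
Definition ys (b : bool) : 'I_4 := if b then y2 else y1.

Lemma theta_shape g : exists Y1 Y2, [/\ yw Y1, yw Y2,
  Th g [:: (x1, false)] = (xs (pi2 g), false) :: Y1,
  Th g [:: (x2, false)] = (xs (~~ pi2 g), false) :: Y2 &
  Th g [:: (y1, false)] = [:: (ys (nu2 g), false)] /\
  Th g [:: (y2, false)] = [:: (ys (~~ nu2 g), false)]].
Proof.
elim/last_ind: g => [|g s [Y1 [Y2 [H1 H2 E1 E2 [E3 E4]]]]]; first by exists [::], [::].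
rewrite !theta_rcons E1 E2 E3 E4 /pi2 /nu2 size_rcons -cats1 count_cat /= addn0 oddD.
rewrite -/(pi2 g) -/(nu2 g).
case: s; case: (pi2 g); case: (nu2 g);
  rewrite /= ?theta_sigma_x1 ?theta_sigma_x2 ?theta_rho_x1 ?theta_rho_x2 //.
all: do 2 eexists; split; try reflexivity; try by split.
all: by rewrite ?yw_cat ?yw_finv ?yw_wy ?yw_gpow1 ?yw_gpow2 ?yw_sw4.
Qed.

Lemma freduce_xhead a Y : (a == x1) || (a == x2) -> yw Y ->
  freduce ((a, false) :: Y) = (a, false) :: freduce Y.
Proof.
move=> Ha /yw_freduce; rewrite freduce_cons.
case: (freduce Y) => [|[c e] r] //= /andP [Hc _].
by case: ifP => // /eqP [Eca _]; subst c; move: Ha Hc; case/orP => /eqP ->.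
Qed.

Lemma ker_in_X2 g : in_ker_theta w m g -> in_X2 g.
Proof.
move=> H; have [Y1 [Y2 [H1 H2 E1 E2 [E3 E4]]]] := theta_shape g.
split; rewrite /in_FVP2 /in_FVK2.
  have := H [:: (x1, false)]; rewrite /feq E1 freduce_xhead //; last by case: (pi2 g).
  by case: (pi2 g).
by have := H [:: (y1, false)]; rewrite /feq E3; case: (nu2 g).
Qed.

End ThetaShape.

(* The element (rho_1 sigma_1)^2 (and its inverse (sigma_1 rho_1)^2) fixes
   y1, y2 and multiplies x1, x2 on the right by conjugates of the "defect"
   [u A^{-1} sw4(u) B^{-1}] or its inverse, where u = w(y1, y2), A = y1^m,
   B = y2^m. So it lies in the kernel iff the defect is trivial, i.e. iff the
   swap relation holds. *)
Section ThetaSquare.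
Variables (w : word 'I_2) (m : int).
Local Notation u := (wy w).
Local Notation su := (rename sw4 (wy w)).
Local Notation A := (gpow y1 m).
Local Notation B := (gpow y2 m).
Local Notation Th := (theta_act w m).

Definition defect := u ++ finv A ++ su ++ finv B.

Lemma swap_rel_defect : swap_rel sw4 y1 y2 m u <-> feq defect [::].
Proof. exact: feq_relator. Qed.

(* [altb false 4] is (rho_1 sigma_1)^2, [altb true 4] is (sigma_1 rho_1)^2 *)
Definition tail1 (b : bool) := if b then finv A ++ su ++ finv B ++ u else finv u ++ B ++ finv su ++ A.
Definition tail2 (b : bool) := if b then B ++ finv su ++ A ++ finv u else defect.

Ltac yw_side := rewrite ?yw_cat ?yw_finv ?yw_sw4 ?yw_wy ?yw_gpow1 ?yw_gpow2.
Ltac theta_step := repeat (first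
  [ rewrite theta_rho_x1; last by yw_side | rewrite theta_rho_x2; last by yw_side
  | rewrite theta_sigma_x1; last by yw_side | rewrite theta_sigma_x2; last by yw_side ]);
  rewrite ?rename_cat ?rename_finv ?rename_gpow ?rename_sw4K /= ?cats0.

Lemma square_x1 b : Th (altb b 4) [:: (x1, false)] = (x1, false) :: tail1 b.
Proof.
case: b; rewrite [LHS]/=; do 4 theta_step.
all: by rewrite /tail1 ?gpow_opp.
Qed.

Lemma square_x2 b : Th (altb b 4) [:: (x2, false)] = (x2, false) :: tail2 b.
Proof.
case: b; rewrite [LHS]/=; do 4 theta_step.
all: by rewrite /tail2 /defect ?gpow_opp.
Qed.

Lemma square_y1 b : Th (altb b 4) [:: (y1, false)] = [:: (y1, false)].
Proof. by case: b. Qed.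
Lemma square_y2 b : Th (altb b 4) [:: (y2, false)] = [:: (y2, false)].
Proof. by case: b. Qed.

Lemma yw_tail2 b : yw (tail2 b).
Proof. by case: b; rewrite /tail2 /defect ?yw_cat ?yw_finv ?yw_sw4 ?yw_wy ?yw_gpow1 ?yw_gpow2. Qed.

(* the tails are rotations and inverses of the defect *)
Lemma tails_trivial b : feq defect [::] -> feq (tail1 b) [::] /\ feq (tail2 b) [::].
Proof.
move=> H; have H1 : feq (tail1 true) [::].
  by have := feq_nil_rotate H; rewrite -!catA.
case: b; split => //.
  by have := feq_finv H; rewrite /defect !finv_cat !finvK -!catA.
by have := feq_finv H1; rewrite /tail1 !finv_cat !finvK -!catA.
Qed.

Lemma tail2_trivial b : feq (tail2 b) [::] -> feq defect [::].
Proof.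
case: b => //= /feq_finv.
by rewrite !finv_cat !finvK -!catA.
Qed.

Lemma pow4_fix_yw b k Y : yw Y -> Th (pow4 b k) Y = Y.
Proof.
elim: k Y => // k IH Y HY; rewrite pow4S theta_cat (theta_fsubst _ _ (altb b 4)).
by rewrite fsubst_fix_yw ?square_y1 ?square_y2 // IH.
Qed.

Lemma pow4_x2 b k : Th (pow4 b k) [:: (x2, false)] = (x2, false) :: pow (tail2 b) k.
Proof.
elim: k => // k IH; rewrite pow4S theta_cat square_x2 theta_cons_gen IH.
by rewrite pow4_fix_yw ?yw_tail2 // cat_cons -powSr.
Qed.

Lemma pow4_ker b k : feq defect [::] -> in_ker_theta w m (pow4 b k).
Proof.
move=> H; elim: k => [|k IH] f //; rewrite pow4S theta_cat.
apply: (feq_trans _ (IH f)); apply: theta_feq; move: f; apply: ker_gen => a.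
have [H1 H2] := tails_trivial b H.
case: (I4_cases a) => ->; rewrite ?square_x1 ?square_x2 ?square_y1 ?square_y2 //.
  exact: feq_cons H1.
exact: feq_cons H2.
Qed.

Lemma X2_ker g : feq defect [::] -> in_X2 g -> in_ker_theta w m g.
Proof.
move=> H /X2_normal_form [b [k Eg]] f.
by apply: (feq_trans (theta_breduce _ _ _ _)); rewrite Eg; apply: pow4_ker.
Qed.

(* a nontrivial kernel element forces the defect to be trivial: it is some
   [pow4 b k] with [k > 0], and free groups are torsion-free *)
Lemma ker_defect g : in_ker_theta w m g -> breduce g != [::] -> feq defect [::].
Proof.
move=> Hk Hne; have /X2_normal_form [b [[|k] Eg]] := ker_in_X2 Hk; first by rewrite Eg in Hne.
have := ker_breduce Hk [:: (x2, false)]; rewrite Eg pow4_x2 => Hx2.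
have Hpow : feq (pow (tail2 b) k.+1) [::].
  apply: (feq_trans (feq_sym (feq_cancel_letter' (x2, false) _))).
  exact: (feq_trans (feq_cons _ Hx2) (feq_cancel_letter' (x2, false) [::])).
exact/(tail2_trivial (b := b))/(free_torsionfree (ltn0Sn k) Hpow).
Qed.

End ThetaSquare.

Lemma not_faithful_defect w m : ~ theta_faithful w m <-> feq (defect w m) [::].
Proof.
split=> [Hnf | Hd Hf].
  apply/eqP; apply: contraT => Hd; exfalso; apply: Hnf => g Hg; apply/eqP; apply: contraT => Hne.
  by rewrite (ker_defect Hg Hne) in Hd.
by have := Hf _ (pow4_ker false 1 Hd).
Qed.

Lemma behead_nonzero_interior (ks : seq int) : all (fun k => k != 0%R) (behead ks) ->
  forall i : nat, 0 < i < (size ks).-1 -> nth 0%R ks i <> 0%R.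
Proof.
move=> /(all_nthP 0%R) H [//|i] /andP [_ Hi]; case: ks H Hi => //= k ks H Hi.
by apply/eqP/H; rewrite ltnW.
Qed.

Theorem theorem2p5 (w : word 'I_2) (m1 : int) :
  (~ theta_faithful w m1 <->
     exists ks : seq int,
       (0 < size ks)%N /\
       (forall i : nat, (0 < i < (size ks).-1)%N -> nth 0%R ks i <> 0%R) /\
       feq w (special_word ks m1))
  /\
  (~ theta_faithful w m1 ->
     (forall g : seq bool, in_ker_theta w m1 g <-> in_X2 g) /\
     (forall g : seq bool, in_X2 g <-> exists n : int, beq g (bpow rho_sigma (2 * n)%R)) /\
     (forall n : int, beq (bpow rho_sigma (2 * n)%R) [::] -> n = 0%R)).
Proof.
have swap_iff : ~ theta_faithful w m1 <-> swap_rel sw2 gA gB m1 w.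
  by rewrite not_faithful_defect -swap_rel_defect swap_rel_wy.
split.
  rewrite swap_iff; split=> [/swap_special_word [ks [Hs Hall Hw]] | [ks [_ [_ Hw]]]].
    by exists ks; split; [| split; [apply: behead_nonzero_interior |]].
  exact: special_word_swap Hw.
move=> /not_faithful_defect Hd; split; last split.
- by move=> g; split; [apply: ker_in_X2 | apply: X2_ker].
- exact: X2_char.
exact: bpow_rho_sigma_nil.
Qed.
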